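(* Let $n\ge 1$ and let $V=\{(y_1,\dots,y_n)\in\overline{\mathbb{R}}_+^{\,n}\mid y_i>1\text{ for all } i=1,\dots,n\}$. Let $K\subseteq \overline{\mathbb{R}}_+^{\,n}$ be a convex subset with $K\cap V=\emptyset$. Then there are nonnegative real numbers $a_1,\dots,a_n$ with $\sum_{i=1}^n a_i=1$ such that \[\sum_{i=1}^n a_i x_i\le 1<\sum_{i=1}^n a_i y_i\quad\text{for all }(x_1,\dots,x_n)\in K\text{ and all }(y_1,\dots,y_n)\in V.\]
   Context: $\overline{\mathbb{R}}_+=[0,+\infty)\cup\{+\infty\}$ with the usual order, $+\infty$ the top element, and arithmetic extended by $r+\infty=\infty+r=+\infty$ for all $r$, $r\cdot(+\infty)=(+\infty)\cdot r=+\infty$ for $r>0$ and $0\cdot(+\infty)=(+\infty)\cdot 0=0$. $\overline{\mathbb{R}}_+^{\,n}$ carries coordinatewise addition and multiplication by scalars $r\in[0,\infty)$. A subset $K$ of $\overline{\mathbb{R}}_+^{\,n}$ is convex if $ra+(1-r)b\in K$ for all $a,b\in K$ and all real $r\in[0,1]$ (computed with the extended arithmetic). *)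

From mathcomp Require Import ssreflect ssrfun ssrbool eqtype ssrnat seq fintype.
From Stdlib Require Import Reals.
Open Scope R_scope.
Set Implicit Arguments.
Unset Strict Implicit.

(* Extended reals: finite values and +infinity.  Elements of the
   extended nonnegative half-line are those satisfying [erp_valid]. *)
Inductive erp : Type := Fin (r : R) | Inf.

Definition erp_valid (x : erp) : Prop :=
  match x with Fin r => 0 <= r | Inf => True end.

Definition eadd (x y : erp) : erp :=
  match x, y with
  | Fin a, Fin b => Fin (a + b)
  | _, _ => Inf
  end.

Definition escale (r : R) (x : erp) : erp :=
  match x with
  | Fin a => Fin (r * a)
  | Inf => if Rlt_dec 0 r then Inf else Fin 0
  end.

Definition ele (x y : erp) : Prop :=
  match x, y with
  | Fin a, Fin b => a <= b
  | _, Inf => True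
  | Inf, Fin _ => False
  end.

Definition elt (x y : erp) : Prop :=
  match x, y with
  | Fin a, Fin b => a < b
  | Fin _, Inf => True
  | Inf, _ => False
  end.

Definition in_ERn (n : nat) (x : 'I_n -> erp) : Prop :=
  forall i, erp_valid (x i).

Definition ecomb (n : nat) (r : R) (a b : 'I_n -> erp) : 'I_n -> erp :=
  fun i => eadd (escale r (a i)) (escale (1 - r) (b i)).

Definition econvex (n : nat) (K : ('I_n -> erp) -> Prop) : Prop :=
  forall a b r, K a -> K b -> 0 <= r <= 1 -> K (ecomb r a b).

Definition Vset (n : nat) (y : 'I_n -> erp) : Prop :=
  in_ERn y /\ forall i, elt (Fin 1) (y i).

Definition rsum (n : nat) (f : 'I_n -> R) : R :=
  foldr (fun i acc => f i + acc) 0 (enum 'I_n).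

Definition esum (n : nat) (f : 'I_n -> erp) : erp :=
  foldr (fun i acc => eadd (f i) acc) (Fin 0) (enum 'I_n).

From mathcomp Require Import ssreflect ssrfun ssrbool eqtype ssrnat seq fintype.
From Stdlib Require Import Reals Lra Psatz Classical ClassicalEpsilon.
Open Scope R_scope.

(* Call a coordinate i infinite if some point of K has x_i = oo.  Convexity
   gives a single point of K that is oo on all infinite coordinates, so they
   cannot be all of them, and moving any x in K towards that point shows that
   some finite coordinate has x_i <= 1.  On K the maps x |-> x_i - 1 along
   finite coordinates are affine, so a minimax lemma for finitely many affine
   functions on a convex set (by induction from two functions, where the weight
   is a supremum of thresholds) yields weights a on the finite coordinates with
   sum_i a_i (x_i - 1) <= 0 on K.  Extended by zero they also give
   sum_i a_i y_i > 1 on V, as does every probability vector. *)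

Definition lsum {I : Type} (s : seq I) (f : I -> R) : R :=
  foldr (fun i acc => f i + acc) 0 s.
Arguments lsum : simpl never.

Lemma lsum_nil {I : Type} (f : I -> R) : lsum [::] f = 0.
Proof. by []. Qed.

Lemma lsum_cons {I : Type} (i : I) s f : lsum (i :: s) f = f i + lsum s f.
Proof. by []. Qed.

Lemma lsum_ext_in {I : eqType} {s : seq I} {f} g :
  {in s, f =1 g} -> lsum s f = lsum s g.
Proof.
elim: s => [|j s IH] fg //; rewrite !lsum_cons fg ?mem_head // IH // => i si.
by apply: fg; rewrite in_cons si orbT.
Qed.

Lemma lsum_scal {I : Type} (s : seq I) c f :
  lsum s (fun i => c * f i) = c * lsum s f.
Proof. by elim: s => [|j s IH]; rewrite ?lsum_nil ?lsum_cons ?IH; ring. Qed.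

Lemma lsum_sub {I : Type} (s : seq I) f g :
  lsum s (fun i => f i - g i) = lsum s f - lsum s g.
Proof. by elim: s => [|j s IH]; rewrite ?lsum_nil ?lsum_cons ?IH; ring. Qed.

Lemma lsum_filter {I : Type} (s : seq I) (p : pred I) f :
  lsum s (fun i => if p i then f i else 0) = lsum (filter p s) f.
Proof.
elim: s => [|j s IH] //=; rewrite lsum_cons IH.
by case: (p j); rewrite ?lsum_cons //; ring.
Qed.

Lemma lsum_le {I : eqType} {s : seq I} {f g} :
  {in s, forall i, f i <= g i} -> lsum s f <= lsum s g.
Proof.
elim: s => [|j s IH] fg; rewrite ?lsum_nil ?lsum_cons; first lra.
have := fg j (mem_head _ _).
have := IH (fun i si => fg i (mem_behead (s := j :: s) si)); lra.
Qed.

Lemma lsum_lt {I : eqType} (s : seq I) f g i0 :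
  {in s, forall i, f i <= g i} -> i0 \in s -> f i0 < g i0 -> lsum s f < lsum s g.
Proof.
elim: s => [|j s IH] fg //; rewrite in_cons !lsum_cons => /orP [/eqP ->|si0] lt0.
  by have /= := lsum_le (fun i si => fg i (mem_behead (s := j :: s) si)); lra.
have := fg j (mem_head _ _).
have /= := IH (fun i si => fg i (mem_behead (s := j :: s) si)) si0 lt0; lra.
Qed.

Lemma lsum_pos_witness {I : eqType} (s : seq I) f :
  0 < lsum s f -> exists2 i, i \in s & 0 < f i.
Proof.
elim: s => [|j s IH]; rewrite ?lsum_nil ?lsum_cons; first lra.
case: (Rlt_or_le 0 (f j)) => [fj _|fj pos]; first by exists j; rewrite ?mem_head.
by have [|i si fi] := IH; [lra | exists i; rewrite ?in_cons ?si ?orbT].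
Qed.

Lemma Rdiv_le_iff a b c : 0 < c -> (a / c <= b <-> a <= b * c).
Proof.
move=> c0; have e : a = a / c * c by field; lra.
by split; nra.
Qed.

Lemma Rle_div_iff a b c : 0 < c -> (b <= a / c <-> b * c <= a).
Proof.
move=> c0; have e : a = a / c * c by field; lra.
by split; nra.
Qed.

Section AffineAlternative.
Context {X : Type} (comb : R -> X -> X -> X).

Definition convex_on (K : X -> Prop) :=
  forall a b r, K a -> K b -> 0 <= r <= 1 -> K (comb r a b).

Definition affine_on (K : X -> Prop) (f : X -> R) :=
  forall a b r, K a -> K b -> 0 <= r <= 1 ->
    f (comb r a b) = r * f a + (1 - r) * f b.

Lemma affine_lsum K {I : eqType} (s : seq I) (w : I -> R) (f : I -> X -> R) :
  (forall i, i \in s -> affine_on K (f i)) ->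
  affine_on K (fun x => lsum s (fun i => w i * f i x)).
Proof.
elim: s => [|j s IH] fs a b r Ka Kb hr; rewrite ?lsum_nil ?lsum_cons; first ring.
rewrite fs ?mem_head // IH //; first ring.
by move=> i si; apply: fs; rewrite in_cons si orbT.
Qed.

Lemma affine_pair_bound {K f g x y} :
  convex_on K -> affine_on K f -> affine_on K g ->
  (forall z, K z -> f z <= 0 \/ g z <= 0) -> K x -> K y ->
  0 < f x -> 0 < g y -> g y * f x <= g x * f y.
Proof.
move=> hK hf hg hfg Kx Ky fx gy.
have gx : g x <= 0 by case: (hfg x Kx); lra.
have fy : f y <= 0 by case: (hfg y Ky); lra.
apply: Rnot_lt_le => lt_gf.
(* Otherwise f and g are both positive at the midpoint r of the points p and q
   of [x, y] where f and g change sign. *)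
pose p := - f y / (f x - f y); pose q := g y / (g y - g x); pose r := (p + q) / 2.
have eq_p : p * (f x - f y) = - f y by rewrite /p; field; lra.
have eq_q : q * (g y - g x) = g y by rewrite /q; field; lra.
have p0 : 0 <= p by rewrite Rle_div_iff; lra.
have q1 : q <= 1 by rewrite Rdiv_le_iff; lra.
have pq : p < q.
  apply: (Rmult_lt_reg_r ((f x - f y) * (g y - g x))); nra.
have hr : 0 <= r <= 1 by rewrite /r; lra.
have Kz := hK x y r Kx Ky hr.
have fz : 0 < (r - p) * (f x - f y) by apply: Rmult_lt_0_compat; rewrite /r; lra.
have gz : 0 < (q - r) * (g y - g x) by apply: Rmult_lt_0_compat; rewrite /r; lra.
by case: (hfg _ Kz); rewrite ?(hf x y r) ?(hg x y r) //; lra.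
Qed.

Lemma affine_alternative2 K f g :
  convex_on K -> affine_on K f -> affine_on K g ->
  (forall x, K x -> f x <= 0 \/ g x <= 0) ->
  exists2 mu, 0 <= mu <= 1 & forall x, K x -> mu * f x + (1 - mu) * g x <= 0.
Proof.
move=> hK hf hg hfg.
have fy_le0 y : K y -> 0 < g y -> f y <= 0 by move=> Ky; case: (hfg y Ky); lra.
have gx_le0 x : K x -> 0 < f x -> g x <= 0 by move=> Kx; case: (hfg x Kx); lra.
(* [mu f x + (1 - mu) g x <= 0] means [mu <= - g x / (f x - g x)] when [f x > 0]
   and [g x / (g x - f x) <= mu] when [g x > 0]; take the supremum of the
   lower bounds. *)
pose E t := t = 0 \/ exists2 y, K y & 0 < g y /\ t = g y / (g y - f y).
have E_le1 : is_upper_bound E 1.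
  move=> t [->|[y Ky [gy ->]]]; first lra.
  by have fy := fy_le0 y Ky gy; rewrite Rdiv_le_iff; lra.
have [mu [mu_ub mu_lub]] : {mu | is_lub E mu}.
  by apply: completeness; [exists 1 | exists 0; left].
have mu_ge y : K y -> 0 < g y -> g y / (g y - f y) <= mu.
  by move=> Ky gy; apply: mu_ub; right; exists y.
have mu_le x : K x -> 0 < f x -> mu <= - g x / (f x - g x).
  move=> Kx fx; have gx := gx_le0 x Kx fx.
  apply: mu_lub => t [->|[y Ky [gy ->]]]; first by rewrite Rle_div_iff; lra.
  have fy := fy_le0 y Ky gy.
  have := affine_pair_bound hK hf hg hfg Kx Ky fx gy.
  rewrite Rle_div_iff; last lra.
  have -> : g y / (g y - f y) * (f x - g x) = g y * (f x - g x) / (g y - f y).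
    by field; lra.
  by rewrite Rdiv_le_iff; nra.
exists mu.
  by split; [apply: mu_ub; left | apply: mu_lub].
move=> x Kx; case: (Rlt_or_le 0 (f x)) => fx.
  have gx := gx_le0 x Kx fx.
  by have := mu_le x Kx fx; rewrite Rle_div_iff; nra.
case: (Rlt_or_le 0 (g x)) => gx.
  have fy := fy_le0 x Kx gx.
  by have := mu_ge x Kx gx; rewrite Rdiv_le_iff; nra.
have : 0 <= mu <= 1 by split; [apply: mu_ub; left | apply: mu_lub].
nra.
Qed.

Lemma affine_alternative K {I : eqType} (j : I) (s : seq I) (f : I -> X -> R) :
  convex_on K -> uniq (j :: s) ->
  (forall i, i \in j :: s -> affine_on K (f i)) ->
  (forall x, K x -> exists2 i, i \in j :: s & f i x <= 0) ->
  exists a : I -> R, [/\ forall i, 0 <= a i, lsum (j :: s) a = 1 &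
    forall x, K x -> lsum (j :: s) (fun i => a i * f i x) <= 0].
Proof.
elim: s j K => [|j' s IH] j K hK uniq_js aff ex_le0.
  exists (fun i => if i == j then 1 else 0); split.
  - by move=> i; case: eqP; lra.
  - by rewrite lsum_cons lsum_nil eqxx; ring.
  - move=> x Kx; rewrite lsum_cons lsum_nil eqxx.
    by case: (ex_le0 x Kx) => i; rewrite mem_seq1 => /eqP ->; lra.
move: uniq_js => /andP [jNs uniq_s].
have aff_j := aff j (mem_head _ _).
have aff_s i : i \in j' :: s -> affine_on K (f i).
  by move=> si; apply: aff; rewrite in_cons si orbT.
(* On [Kj] one of the remaining [f i] is nonpositive, so the induction
   hypothesis applies there; the two-function case then mixes the resulting
   combination [g] with [f j] on all of K. *)
pose Kj x := K x /\ 0 < f j x.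
have [b [b_ge0 b_sum b_Kj]] : exists b : I -> R, [/\ forall i, 0 <= b i,
    lsum (j' :: s) b = 1 &
    forall x, Kj x -> lsum (j' :: s) (fun i => b i * f i x) <= 0].
  apply: IH => //.
  - move=> x y r [Kx fx] [Ky fy] hr; split; first exact: hK.
    by rewrite aff_j //; nra.
  - by move=> i si x y r [Kx _] [Ky _]; apply: aff_s.
  - move=> x [Kx fx]; case: (ex_le0 x Kx) => i.
    by rewrite in_cons => /orP [/eqP ->|si] fi; [lra | exists i].
pose g x := lsum (j' :: s) (fun i => b i * f i x).
have [mu mu01 mu_K] : exists2 mu, 0 <= mu <= 1 &
    forall x, K x -> mu * g x + (1 - mu) * f j x <= 0.
  apply: affine_alternative2 => //; first exact: affine_lsum.
  move=> x Kx; case: (Rlt_or_le 0 (f j x)) => fx; [left; exact: b_Kj | by right].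
have neq_j i : i \in j' :: s -> (i == j) = false.
  by move=> si; apply/eqP => eij; rewrite -eij si in jNs.
exists (fun i => if i == j then 1 - mu else mu * b i); split.
- by move=> i; case: eqP => _; [lra | have := b_ge0 i; nra].
- rewrite lsum_cons eqxx (lsum_ext_in (fun i => mu * b i)).
    by rewrite lsum_scal b_sum; ring.
  by move=> i si; rewrite neq_j.
- move=> x Kx; rewrite lsum_cons eqxx (lsum_ext_in (fun i => mu * (b i * f i x))).
    by rewrite lsum_scal; have := mu_K x Kx; rewrite /g; lra.
  by move=> i si; rewrite neq_j //; ring.
Qed.
End AffineAlternative.

Definition re (x : erp) : R := match x with Fin r => r | Inf => 0 end.

Lemma re_escale r x : re (escale r x) = r * re x.
Proof. by case: x => [a|] //=; case: Rlt_dec => _ /=; ring. Qed.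

Lemma escale_Inf r : 0 < r -> escale r Inf = Inf.
Proof. by rewrite /=; case: Rlt_dec. Qed.

Lemma escale_eq_Inf r x : escale r x = Inf -> 0 < r /\ x = Inf.
Proof. by case: x => [a|] //=; case: Rlt_dec. Qed.

Lemma eadd_Inf_r x : eadd x Inf = Inf.
Proof. by case: x. Qed.

Definition lesum {I : Type} (s : seq I) (g : I -> erp) : erp :=
  foldr (fun i acc => eadd (g i) acc) (Fin 0) s.

Lemma lesum_Inf {I : eqType} {s : seq I} {g} i :
  i \in s -> g i = Inf -> lesum s g = Inf.
Proof.
elim: s => [|j s IH] //=; rewrite in_cons => /orP [/eqP -> ->|si gi] //.
by rewrite IH // eadd_Inf_r.
Qed.

Lemma lesum_Fin {I : eqType} (s : seq I) g :
  (forall i, i \in s -> g i <> Inf) -> lesum s g = Fin (lsum s (fun i => re (g i))).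
Proof.
elim: s => [|j s IH] //= gs.
rewrite IH; last by move=> i si; apply: gs; rewrite in_cons si orbT.
by rewrite lsum_cons; have := gs j (mem_head _ _); case: (g j).
Qed.

Lemma lesum_escale_gt1 {I : eqType} (s : seq I) (a : I -> R) (y : I -> erp) :
  (forall i, 0 <= a i) -> lsum s a = 1 -> (forall i, elt (Fin 1) (y i)) ->
  elt (Fin 1) (lesum s (fun i => escale (a i) (y i))).
Proof.
move=> a_ge0 a_sum y_gt1.
case: (classic (exists2 i, i \in s & escale (a i) (y i) = Inf)) => [[i si ai]|no_Inf].
  by rewrite (lesum_Inf i si ai).
have {}no_Inf i : i \in s -> escale (a i) (y i) <> Inf.
  by move=> si ai; apply: no_Inf; exists i.
have term_ge i : i \in s ->
    a i <= re (escale (a i) (y i)) /\ (0 < a i -> a i < re (escale (a i) (y i))).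
  move=> si; rewrite re_escale; have := a_ge0 i; have := y_gt1 i.
  case yi: (y i) => [v|] /= v1 ai; first by split; nra.
  have : ~ 0 < a i by move=> ai0; apply: (no_Inf i si); rewrite yi escale_Inf.
  by split; lra.
have [i0 si0 ai0] : exists2 i, i \in s & 0 < a i by apply: lsum_pos_witness; lra.
rewrite lesum_Fin //= -a_sum.
apply: (lsum_lt _ _ _ i0 _ si0) => [i si|]; first exact: (term_ge i si).1.
exact: (term_ge i0 si0).2.
Qed.

Lemma finite_lower_bound {I : eqType} (s : seq I) (v : I -> R) c :
  (forall i, i \in s -> c < v i) -> exists2 m, c < m & forall i, i \in s -> m <= v i.
Proof.
elim: s => [|j s IH] vs; first by exists (c + 1); [lra | by []].
have [m cm ms] := IH (fun i si => vs i (mem_behead (s := j :: s) si)).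
exists (Rmin m (v j)); first by apply: Rmin_glb_lt; [lra | apply: vs; rewrite mem_head].
move=> i; rewrite in_cons => /orP [/eqP ->|si]; first exact: Rmin_r.
exact: Rle_trans (Rmin_l _ _) (ms i si).
Qed.

Definition inf_at {n} (K : ('I_n -> erp) -> Prop) (i : 'I_n) :=
  exists2 x, K x & x i = Inf.

Definition finite_coord {n} (K : ('I_n -> erp) -> Prop) : pred 'I_n :=
  fun i => if excluded_middle_informative (inf_at K i) then false else true.

Lemma finite_coordP {n} (K : ('I_n -> erp) -> Prop) i :
  reflect (~ inf_at K i) (finite_coord K i).
Proof. by rewrite /finite_coord; case: excluded_middle_informative; constructor. Qed.

Section ConvexCoordinates.
Context {n : nat} {K : ('I_n -> erp) -> Prop}.
Hypothesis hconv : econvex K.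

Lemma convex_Inf_on {x0} (s : seq 'I_n) :
  K x0 -> (forall i, i \in s -> inf_at K i) ->
  exists2 x, K x & forall i, i \in s -> x i = Inf.
Proof.
move=> Kx0; elim: s => [|j s IH] inf_s; first by exists x0.
have [x Kx xs] := IH (fun i si => inf_s i (mem_behead (s := j :: s) si)).
have [w Kw wj] := inf_s j (mem_head _ _).
exists (ecomb (1 / 2) x w); first by apply: hconv => //; lra.
move=> i; rewrite in_cons /ecomb => /orP [/eqP ->|si].
  by rewrite wj escale_Inf ?eadd_Inf_r //; lra.
by rewrite xs // escale_Inf //; lra.
Qed.

Hypothesis hK : forall x, K x -> in_ERn x.

Lemma finite_coord_Fin {i x} :
  finite_coord K i -> K x -> exists2 v, x i = Fin v & 0 <= v.
Proof.
move=> /finite_coordP fi Kx; have := hK x Kx i.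
by case xi: (x i) => [v|] //= v0; [exists v | case: fi; exists x].
Qed.

Lemma affine_finite_coord i :
  finite_coord K i -> affine_on (@ecomb n) K (fun x => re (x i) - 1).
Proof.
move=> fi x y r Kx Ky _; have [v xv _] := finite_coord_Fin fi Kx.
by have [w yw _] := finite_coord_Fin fi Ky; rewrite /ecomb xv yw /=; ring.
Qed.

Lemma esum_finite_coord_le1 (a : 'I_n -> R) x : K x ->
  lsum (filter (finite_coord K) (enum 'I_n)) a = 1 ->
  lsum (filter (finite_coord K) (enum 'I_n)) (fun i => a i * (re (x i) - 1)) <= 0 ->
  ele (esum (fun i => escale (if finite_coord K i then a i else 0) (x i))) (Fin 1).
Proof.
move=> Kx a_sum a_le.
change (ele (lesum (enum 'I_n)
  (fun i => escale (if finite_coord K i then a i else 0) (x i))) (Fin 1)).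
rewrite lesum_Fin; last first.
  move=> i _ /escale_eq_Inf []; case fi: (finite_coord K i); last lra.
  by have [v -> _] := finite_coord_Fin fi Kx.
rewrite (lsum_ext_in (fun i => if finite_coord K i then a i * re (x i) else 0)) /=.
  rewrite lsum_filter; move: a_le.
  rewrite (lsum_ext_in (fun i => a i * re (x i) - a i)) ?lsum_sub ?a_sum.
    by move/Rminus_le.
  by move=> i _; ring.
by move=> i _; rewrite re_escale; case: (finite_coord K i); ring.
Qed.

Hypothesis hdisj : forall y, K y -> ~ Vset y.

(* Otherwise move x towards a point of K that is infinite off the finite
   coordinates: near enough to x the result lies in V. *)
Lemma exists_finite_coord_le1 {x} :
  K x -> exists2 i, finite_coord K i & re (x i) - 1 <= 0.
Proof.
move=> Kx; apply: NNPP => no_le1.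
pose T := filter (finite_coord K) (enum 'I_n).
have x_gt1 i : i \in T -> 1 < re (x i).
  rewrite mem_filter => /andP [fi _]; apply: Rnot_le_lt => le1.
  by apply: no_le1; exists i => //; lra.
have [|xs Kxs xs_Inf] := convex_Inf_on [seq i <- enum 'I_n | ~~ finite_coord K i] Kx.
  by move=> i; rewrite mem_filter => /andP [/finite_coordP nfi _]; apply: NNPP.
have [m m1 m_le] := finite_lower_bound _ _ _ x_gt1.
pose r := (1 + / m) / 2.
have im : / m * m = 1 by field; lra.
have im0 : 0 < / m by apply: Rinv_0_lt_compat; lra.
have r1 : r < 1 by rewrite /r; nra.
have hr : 0 <= r <= 1 by split; rewrite /r; nra.
have Kz := hconv x xs r Kx Kxs hr.
apply: (hdisj _ Kz); split; first exact: hK _ Kz.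
move=> i; case fi: (finite_coord K i).
  have [v xv _] := finite_coord_Fin fi Kx; have [w xsw w0] := finite_coord_Fin fi Kxs.
  have mv : m <= re (x i) by apply: m_le; rewrite mem_filter fi mem_enum.
  by rewrite xv /= in mv; rewrite /ecomb xv xsw /= /r; nra.
rewrite /ecomb (xs_Inf i); last by rewrite mem_filter fi mem_enum.
by rewrite escale_Inf ?eadd_Inf_r //; lra.
Qed.

Lemma finite_coords_cons : (0 < n)%nat ->
  exists j s, filter (finite_coord K) (enum 'I_n) = j :: s.
Proof.
move=> n0; have [j fj] : exists j, finite_coord K j.
  case: (boolP (finite_coord K (Ordinal n0))) => [f0|/finite_coordP/NNPP [x0 Kx0 _]].
    by exists (Ordinal n0).
  by have [j fj _] := exists_finite_coord_le1 Kx0; exists j.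
case eT: (filter _ _) => [|j' s]; last by exists j', s.
have : j \in filter (finite_coord K) (enum 'I_n) by rewrite mem_filter fj mem_enum.
by rewrite eT.
Qed.

End ConvexCoordinates.

Theorem lemma2p6 (n : nat) (hn : (1 <= n)%nat)
  (K : ('I_n -> erp) -> Prop)
  (hK : forall x, K x -> in_ERn x)
  (hconv : econvex K)
  (hdisj : forall y, K y -> ~ Vset y) :
  exists a : 'I_n -> R,
    (forall i, 0 <= a i) /\ rsum a = 1 /\
    (forall x, K x -> ele (esum (fun i => escale (a i) (x i))) (Fin 1)) /\
    (forall y, Vset y -> elt (Fin 1) (esum (fun i => escale (a i) (y i)))).
Proof.
have [j [s eT]] := finite_coords_cons hconv hK hdisj hn.
have [a [a_ge0 a_sum a_K]] : exists a : 'I_n -> R, [/\ forall i, 0 <= a i,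
    lsum (j :: s) a = 1 &
    forall x, K x -> lsum (j :: s) (fun i => a i * (re (x i) - 1)) <= 0].
  apply: (affine_alternative (@ecomb n) K j s) => //.
  - by rewrite -eT filter_uniq ?enum_uniq.
  - by move=> i; rewrite -eT mem_filter => /andP [fi _]; exact: affine_finite_coord.
  - move=> x Kx; have [i fi le1] := exists_finite_coord_le1 hconv hK hdisj Kx.
    by exists i; rewrite // -eT mem_filter fi mem_enum.
pose b i := if finite_coord K i then a i else 0.
have b_ge0 i : 0 <= b i by rewrite /b; case: finite_coord; [exact: a_ge0 | lra].
have b_sum : lsum (enum 'I_n) b = 1 by rewrite lsum_filter eT.
exists b; split; [exact: b_ge0 | split; [exact: b_sum | split]].
- by move=> x Kx; apply: (esum_finite_coord_le1 hK) => //; rewrite eT //; exact: a_K.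
- by move=> y Vy; apply: lesum_escale_gt1 => //; exact: proj2 Vy.
Qed.
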